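(* Let $p<1/2$, $c(p)=\big|\log\frac{1-p}{p}\big|^{-1}$, and $c>c(p)$. Then $$\mu_p^{\mathcal{U}_0}\big(x: D(x)>c\log t\big)=o(1/t)\quad\text{as }t\to\infty.$$
   Context: Configurations are subsets of $\mathbb{Z}$ (occupied sites). $O$ is the configuration with every negative site occupied and every non-negative site empty; $\mathcal{U}_0$ is the set of configurations in which the number of particles in $[0,\infty)$ is finite and equal to the number of holes in $(-\infty,0)$. For $x\in\mathcal{U}_0$, $D(x)=\sum_{k\ge1}B^{(k)}(x)$, where $B^{(k)}(x)$ is the position of the $k$-th rightmost particle of $x$ plus $k$ (equivalently, the minimal number of nearest-neighbour particle jumps to empty sites needed to go from $O$ to $x$). For $p\in(0,1/2)$, $\mu_p$ is the product measure on configurations under which site $i\in\mathbb{Z}$ is occupied independently with probability $\big(1+\big(\tfrac{1-p}{p}\big)^i\big)^{-1}$; $\mathcal{U}_0$ has positive $\mu_p$-probability and $\mu_p^{\mathcal{U}_0}=\mu_p(\cdot\mid\mathcal{U}_0)$. *)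

From Stdlib Require Import Reals ZArith List.
Open Scope R_scope.

(* A configuration: the set of occupied sites, as a boolean predicate on Z. *)
Definition Config := Z -> bool.

(* Occupation probability of site i under mu_p: (1 + ((1-p)/p)^i)^{-1}. *)
Definition rho (p : R) (i : Z) : R := / (1 + powerRZ ((1 - p) / p) i).

Definition site_factor (p : R) (x : Config) (i : Z) : R :=
  if x i then rho p i else 1 - rho p i.

Fixpoint fin_prod (p : R) (x : Config) (N : nat) : R :=
  match N with
  | O => site_factor p x 0%Z
  | S n => fin_prod p x n * site_factor p x (Z.of_nat (S n))
             * site_factor p x (- Z.of_nat (S n))%Z
  end.

(* mu_p({x}) = m : the infinite product over Z (limit of the symmetric
   finite products, by continuity of the measure from above). *)
Definition point_mass (p : R) (x : Config) (m : R) : Prop :=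
  Un_cv (fun N => fin_prod p x N) m.

Fixpoint list_mass (p : R) (L : list Config) (r : R) : Prop :=
  match L with
  | nil => r = 0
  | x :: L' => exists m r', point_mass p x m /\ list_mass p L' r' /\ r = m + r'
  end.

Definition distinct_configs (L : list Config) : Prop :=
  ForallOrdPairs (fun x y => exists z, x z <> y z) L.

(* s = sum_{x in A} mu_p({x})  (sum of nonnegative terms = sup of finite partial
   sums).  For a countable set A this is mu_p(A) by countable additivity. *)
Definition mass (p : R) (A : Config -> Prop) (s : R) : Prop :=
  is_lub (fun r => exists L, distinct_configs L /\ Forall A L /\ list_mass p L r) s.

Definition U0 (x : Config) : Prop :=
  exists P H : list Z, NoDup P /\ NoDup H /\ length P = length H /\
    (forall z, (0 <= z)%Z -> (x z = true <-> In z P)) /\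
    (forall z, (z < 0)%Z -> (x z = false <-> In z H)).

(* v = mu_p^{U_0}(A) = mu_p(A /\ U_0) / mu_p(U_0); U_0 is countable. *)
Definition cond_prob (p : R) (A : Config -> Prop) (v : R) : Prop :=
  exists a z, mass p (fun x => U0 x /\ A x) a /\ mass p U0 z /\ v = a / z.

Fixpoint zsum (f : nat -> Z) (K : nat) : Z :=
  match K with
  | O => 0%Z
  | S k => (zsum f k + f (S k))%Z
  end.

(* D(x) = d, where D(x) = sum_{k>=1} B^(k)(x), B^(k)(x) = pos_k + k, pos_k the
   position of the k-th rightmost particle (pos enumerates the occupied sites in
   strictly decreasing order). *)
Definition DVal (x : Config) (d : Z) : Prop :=
  exists pos : nat -> Z,
    (forall k, (1 <= k)%nat -> (pos (S k) < pos k)%Z) /\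
    (forall z, x z = true <-> exists k, (1 <= k)%nat /\ pos k = z) /\
    exists K : nat, (forall k, (K <= k)%nat -> (pos k + Z.of_nat k)%Z = 0%Z) /\
      d = zsum (fun k => (pos k + Z.of_nat k)%Z) K.

From Stdlib Require Import Reals ZArith List Lra Lia.
Open Scope R_scope.

(* Chernoff bound.  Under mu_p the sites are independent, and
   D(x) = sum of i over occupied i >= 0 + sum of |i| over empty i < 0, where site i
   carries its energy |i| with probability at most q^-|i|, q = (1-p)/p > 1.  Hence
   E[exp(l D)] <= prod_{m >= 1} (1 + (e^l/q)^m)^2 < oo whenever l < log q, and
   Markov's inequality gives mu_p(D > c log t) <= C t^(-c l).  As c > 1/log q we can
   pick l < log q with c l > 1; dividing by mu_p(U_0) >= mu_p({O}) > 0 gives o(1/t).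
   Masses are suprema over finite lists of configurations, each agreeing with O
   outside some finite window, so every estimate reduces to products over windows. *)

(** * Product weights summed over distinct configurations *)

Fixpoint prod_sites (h : Z -> bool -> R) (x : Config) (S : list Z) : R :=
  match S with
  | nil => 1
  | i :: S' => h i (x i) * prod_sites h x S'
  end.

Fixpoint total_mass (h : Z -> bool -> R) (S : list Z) : R :=
  match S with
  | nil => 1
  | i :: S' => (h i true + h i false) * total_mass h S'
  end.

Fixpoint sum_configs (f : Config -> R) (L : list Config) : R :=
  match L with
  | nil => 0
  | x :: L' => f x + sum_configs f L'
  end.

Definition distinct_on (S : list Z) (L : list Config) : Prop :=
  ForallOrdPairs (fun x y => exists z, In z S /\ x z <> y z) L.

Lemma ForallOrdPairs_filter {A} (P : A -> A -> Prop) (g : A -> bool) L :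
  ForallOrdPairs P L -> ForallOrdPairs P (filter g L).
Proof.
  induction 1 as [|a L HaL _ IH]; simpl; [constructor|].
  destruct (g a); [|exact IH].
  constructor; [|exact IH].
  rewrite Forall_forall in *. intros y Hy. apply HaL. now apply filter_In in Hy.
Qed.

Lemma ForallOrdPairs_impl_in {A} (P Q : A -> A -> Prop) L :
  (forall x y, In x L -> In y L -> P x y -> Q x y) ->
  ForallOrdPairs P L -> ForallOrdPairs Q L.
Proof.
  intros HPQ HP; induction HP as [|a L HaL _ IH]; constructor.
  - rewrite Forall_forall in *. intros y Hy. apply HPQ; simpl; auto.
  - apply IH. intros x y Hx Hy. apply HPQ; simpl; auto.
Qed.

Lemma sum_configs_split_at (f : Config -> R) (a : Z) L :
  sum_configs f L = sum_configs f (filter (fun x => Bool.eqb (x a) true) L)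
                    + sum_configs f (filter (fun x => Bool.eqb (x a) false) L).
Proof. induction L as [|x L IH]; simpl; [lra|]. destruct (x a); simpl; lra. Qed.

Lemma sum_configs_scal (f : Config -> R) (k : R) L :
  sum_configs (fun x => k * f x) L = k * sum_configs f L.
Proof. induction L as [|x L IH]; simpl; [ring|]. rewrite IH; ring. Qed.

Lemma sum_configs_le (f g : Config -> R) L :
  (forall x, In x L -> f x <= g x) -> sum_configs f L <= sum_configs g L.
Proof.
  induction L as [|x L IH]; simpl; intros Hfg; [lra|].
  pose proof (Hfg x (or_introl eq_refl)).
  assert (sum_configs f L <= sum_configs g L) by (apply IH; auto).
  lra.
Qed.

Lemma prod_sites_nonneg h x S : (forall i b, 0 <= h i b) -> 0 <= prod_sites h x S.
Proof. intro Hh. induction S as [|i S IH]; simpl; [lra|]. now apply Rmult_le_pos. Qed.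

Lemma total_mass_nonneg h S : (forall i b, 0 <= h i b) -> 0 <= total_mass h S.
Proof.
  intro Hh. induction S as [|i S IH]; simpl; [lra|].
  apply Rmult_le_pos; [|exact IH]. pose proof (Hh i true). pose proof (Hh i false). lra.
Qed.

Lemma distinct_on_filter_at a S L b :
  distinct_on (a :: S) L -> distinct_on S (filter (fun x => Bool.eqb (x a) b) L).
Proof.
  intro HL. apply ForallOrdPairs_impl_in with
    (P := fun x y => exists z, In z (a :: S) /\ x z <> y z).
  - intros x y Hx Hy [z [[<- | Hz] Hne]]; [|eauto].
    apply filter_In, proj2, Bool.eqb_prop in Hx, Hy. congruence.
  - now apply ForallOrdPairs_filter.
Qed.

(* Summing the product weights over configurations that are pairwise distinct
   on S counts each of the 2^|S| patterns on S at most once. *)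
Lemma sum_prod_sites_le_total_mass (h : Z -> bool -> R) :
  (forall i b, 0 <= h i b) ->
  forall S L, distinct_on S L ->
  sum_configs (fun x => prod_sites h x S) L <= total_mass h S.
Proof.
  intros Hh S. induction S as [|a S IH]; intros L HL.
  - destruct L as [|x [|y L]]; simpl; try lra.
    inversion HL as [|? ? Hx]; subst. inversion Hx as [|? ? [z [[] _]]].
  - assert (Hb : forall b,
      sum_configs (fun x => prod_sites h x (a :: S))
        (filter (fun x => Bool.eqb (x a) b) L) <= h a b * total_mass h S).
    { intro b.
      apply Rle_trans with (sum_configs (fun x => h a b * prod_sites h x S)
                              (filter (fun x => Bool.eqb (x a) b) L)).
      - apply sum_configs_le. intros x Hx.
        apply filter_In, proj2, Bool.eqb_prop in Hx. simpl. rewrite Hx. lra.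
      - rewrite sum_configs_scal. apply Rmult_le_compat_l; [apply Hh|].
        now apply IH, distinct_on_filter_at. }
    rewrite (sum_configs_split_at _ a L). simpl total_mass.
    pose proof (Hb true). pose proof (Hb false). lra.
Qed.

(** * Windows, the configuration O and the functional D *)

Fixpoint window (N : nat) : list Z :=
  match N with
  | O => 0%Z :: nil
  | S n => Z.of_nat (S n) :: (- Z.of_nat (S n))%Z :: window n
  end.

Lemma in_window z N : (Z.abs z <= Z.of_nat N)%Z -> In z (window N).
Proof.
  induction N as [|N IH]; intros Hz; simpl; [lia|].
  destruct (Z.eq_dec z (Z.of_nat (S N))) as [->|]; [now left|right].
  destruct (Z.eq_dec z (- Z.of_nat (S N))) as [->|]; [now left|right].
  apply IH. lia.
Qed.

Definition config_O : Config := fun z => (z <? 0)%Z.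

Definition agrees_with_O_outside (N : nat) (x : Config) : Prop :=
  forall z, (Z.of_nat N < Z.abs z)%Z -> x z = config_O z.

Lemma distinct_on_window N L :
  distinct_configs L -> Forall (agrees_with_O_outside N) L ->
  distinct_on (window N) L.
Proof.
  intros HD HO. rewrite Forall_forall in HO.
  apply ForallOrdPairs_impl_in with (P := fun x y => exists z, x z <> y z); [|exact HD].
  intros x y Hx Hy [z Hz]. exists z. split; [|exact Hz].
  apply in_window. destruct (Z_le_gt_dec (Z.abs z) (Z.of_nat N)) as [|Hout]; [assumption|].
  exfalso. apply Hz. rewrite (HO x Hx), (HO y Hy) by lia. reflexivity.
Qed.

Lemma Forall_eventually (P : Config -> nat -> Prop) L :
  (forall x, In x L -> exists N0, forall N, (N0 <= N)%nat -> P x N) ->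
  exists N, forall x, In x L -> P x N.
Proof.
  intro HL. enough (exists N0, forall N, (N0 <= N)%nat -> forall x, In x L -> P x N)
    as [N0 HN0] by (exists N0; apply HN0; lia).
  induction L as [|y L IH]; [exists 0%nat; intros _ _ _ []|].
  destruct (HL y (or_introl eq_refl)) as [N1 H1].
  destruct IH as [N2 H2]; [intros x Hx; apply HL; now right|].
  exists (Nat.max N1 N2). intros N HN x [<-|Hx]; [apply H1; lia|apply H2; [lia|exact Hx]].
Qed.

Lemma U0_eventually_O x : U0 x ->
  exists N0, forall N, (N0 <= N)%nat -> agrees_with_O_outside N x.
Proof.
  intros [P [H [_ [_ [_ [HP HH]]]]]].
  assert (Hbound : exists M, forall z, In z (P ++ H) -> (Z.abs z <= Z.of_nat M)%Z).
  { induction (P ++ H) as [|a l [M HM]]; [exists 0%nat; intros z []|].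
    exists (Nat.max M (Z.to_nat (Z.abs a))). intros z [<-|Hz]; [lia|].
    specialize (HM z Hz). lia. }
  destruct Hbound as [M HM]. exists M. intros N HN z Hz. unfold config_O.
  destruct (Z.ltb_spec z 0), (x z) eqn:E; try reflexivity.
  - apply HH in E; [|lia]. specialize (HM z (in_or_app _ _ _ (or_intror E))). lia.
  - apply HP in E; [|lia]. specialize (HM z (in_or_app _ _ _ (or_introl E))). lia.
Qed.

Lemma U0_config_O : U0 config_O.
Proof.
  exists nil, nil. repeat split; try constructor; intros Hx; try contradiction;
    unfold config_O in Hx; [apply Z.ltb_lt in Hx | apply Z.ltb_ge in Hx]; lia.
Qed.

Fixpoint zsum_over (f : Z -> Z) (S : list Z) : Z :=
  match S with
  | nil => 0%Z
  | i :: S' => (f i + zsum_over f S')%Z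
  end.

(* D(x) is the sum of the positions of the particles in [0, oo) plus the sum of
   the distances to 0 of the holes in (-oo, 0); [site_energy] is the site-wise
   contribution, written as (occupied value) + (|i| for every negative i). *)
Definition site_energy (i : Z) (b : bool) : Z :=
  ((if b then i else 0) + (if (i <? 0)%Z then - i else 0))%Z.

Definition occupied_value (x : Config) (i : Z) : Z := if x i then i else 0%Z.

Lemma zsum_over_window_energy x N :
  zsum_over (fun i => site_energy i (x i)) (window N)
  = (zsum_over (occupied_value x) (window N) + zsum (fun k => Z.of_nat k) N)%Z.
Proof.
  unfold site_energy, occupied_value.
  induction N as [|N IH]; cbn [window zsum_over zsum]; [destruct (x 0%Z); simpl; lia|].
  rewrite IH.
  destruct (Z.ltb_spec (Z.of_nat (S N)) 0), (Z.ltb_spec (- Z.of_nat (S N)) 0),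
    (x (Z.of_nat (S N))), (x (- Z.of_nat (S N))%Z); lia.
Qed.

Fixpoint interval_sum (f : Z -> Z) (a : Z) (n : nat) : Z :=
  match n with
  | O => 0%Z
  | S n' => (f a + interval_sum f (a + 1) n')%Z
  end.

Lemma interval_sum_add f m n : forall a,
  interval_sum f a (m + n) = (interval_sum f a m + interval_sum f (a + Z.of_nat m) n)%Z.
Proof.
  induction m as [|m IH]; intro a; cbn [interval_sum Nat.add]; [simpl Z.of_nat; now rewrite Z.add_0_r|].
  rewrite IH. replace (a + 1 + Z.of_nat m)%Z with (a + Z.of_nat (S m))%Z by lia. lia.
Qed.

Lemma interval_sum_zero f a n :
  (forall z, (a <= z < a + Z.of_nat n)%Z -> f z = 0%Z) -> interval_sum f a n = 0%Z.
Proof.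
  revert a; induction n as [|n IH]; intros a Hf; simpl; [reflexivity|].
  rewrite Hf by lia. rewrite IH; [reflexivity|]. intros z Hz; apply Hf; lia.
Qed.

Lemma zsum_over_window f N :
  zsum_over f (window N) = interval_sum f (- Z.of_nat N) (2 * N + 1).
Proof.
  induction N as [|N IH]; [simpl; lia|].
  cbn [window zsum_over]. rewrite IH.
  replace (2 * S N + 1)%nat with (1 + ((2 * N + 1) + 1))%nat by lia.
  rewrite !interval_sum_add.
  replace (- Z.of_nat (S N) + Z.of_nat 1)%Z with (- Z.of_nat N)%Z by lia.
  replace (- Z.of_nat N + Z.of_nat (2 * N + 1))%Z with (Z.of_nat (S N)) by lia.
  simpl. lia.
Qed.

Lemma zsum_add (f g : nat -> Z) K :
  zsum (fun k => (f k + g k)%Z) K = (zsum f K + zsum g K)%Z.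
Proof. induction K as [|K IH]; simpl; [reflexivity|]. rewrite IH; lia. Qed.

Lemma zsum_stable (f : nat -> Z) K N :
  (K <= N)%nat -> (forall k, (K <= k)%nat -> f k = 0%Z) -> zsum f N = zsum f K.
Proof.
  intros HKN Hf. induction HKN as [|N HKN IH]; [reflexivity|].
  simpl. rewrite IH, Hf by lia. lia.
Qed.

Section Enumeration.
Variables (x : Config) (pos : nat -> Z).
Hypothesis pos_decr : forall k, (1 <= k)%nat -> (pos (S k) < pos k)%Z.
Hypothesis pos_enum : forall z, x z = true <-> exists k, (1 <= k)%nat /\ pos k = z.

Lemma pos_lt j k : (1 <= j)%nat -> (j < k)%nat -> (pos k < pos j)%Z.
Proof.
  intros Hj Hjk. induction Hjk as [|k Hjk IH]; [apply pos_decr; lia|].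
  pose proof (pos_decr k ltac:(lia)). lia.
Qed.

Lemma pos_le j k : (1 <= j)%nat -> (j <= k)%nat -> (pos k <= pos j)%Z.
Proof.
  intros Hj Hjk. destruct (Nat.eq_dec j k) as [->|]; [lia|].
  pose proof (pos_lt j k Hj ltac:(lia)). lia.
Qed.

Lemma occupied_pos k : (1 <= k)%nat -> x (pos k) = true.
Proof. intro Hk. apply pos_enum. eauto. Qed.

Lemma empty_above_pos1 z : (pos 1 < z)%Z -> x z = false.
Proof.
  intro Hz. destruct (x z) eqn:E; [|reflexivity].
  apply pos_enum in E as [k [Hk <-]]. pose proof (pos_le 1 k ltac:(lia) Hk). lia.
Qed.

Lemma empty_between n z : (1 <= n)%nat -> (pos (S n) < z < pos n)%Z -> x z = false.
Proof.
  intros Hn Hz. destruct (x z) eqn:E; [|reflexivity].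
  apply pos_enum in E as [k [Hk <-]]. destruct (le_lt_dec k n) as [Hkn|Hnk].
  - pose proof (pos_le k n Hk Hkn). lia.
  - pose proof (pos_le (S n) k ltac:(lia) Hnk). lia.
Qed.

Lemma interval_sum_occupied n : (1 <= n)%nat ->
  interval_sum (occupied_value x) (pos n) (Z.to_nat (pos 1 - pos n) + 1) = zsum pos n.
Proof.
  induction n as [|n IH]; intro Hn; [lia|].
  destruct (Nat.eq_dec n 0) as [->|Hn0].
  { replace (pos 1%nat - pos 1%nat)%Z with 0%Z by lia. simpl.
    unfold occupied_value. rewrite occupied_pos by lia. lia. }
  pose proof (pos_decr n ltac:(lia)). pose proof (pos_le 1 n ltac:(lia) ltac:(lia)).
  set (gap := (Z.to_nat (pos n - pos (S n)) - 1)%nat).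
  replace (Z.to_nat (pos 1%nat - pos (S n)) + 1)%nat
    with (1 + gap + (Z.to_nat (pos 1%nat - pos n) + 1))%nat by lia.
  rewrite 2!interval_sum_add.
  replace (pos (S n) + Z.of_nat (1 + gap))%Z with (pos n) by lia.
  rewrite IH by lia. rewrite (interval_sum_zero _ _ gap).
  - simpl. unfold occupied_value. rewrite occupied_pos by lia. lia.
  - intros z Hz. unfold occupied_value. rewrite (empty_between n) by lia. reflexivity.
Qed.

Lemma window_sum_occupied N : (1 <= N)%nat ->
  pos N = (- Z.of_nat N)%Z -> (pos 1 <= Z.of_nat N)%Z ->
  zsum_over (occupied_value x) (window N) = zsum pos N.
Proof.
  intros HN HpN Hp1. pose proof (pos_le 1 N ltac:(lia) HN).
  rewrite zsum_over_window.
  replace (2 * N + 1)%nat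
    with ((Z.to_nat (pos 1%nat - pos N) + 1) + Z.to_nat (Z.of_nat N - pos 1%nat))%nat by lia.
  rewrite interval_sum_add, <- HpN, interval_sum_occupied by exact HN.
  rewrite interval_sum_zero; [lia|].
  intros z Hz. unfold occupied_value. rewrite empty_above_pos1 by lia. reflexivity.
Qed.

End Enumeration.

Lemma DVal_eventually x d : DVal x d ->
  exists N0, forall N, (N0 <= N)%nat ->
    agrees_with_O_outside N x /\ zsum_over (fun i => site_energy i (x i)) (window N) = d.
Proof.
  intros [pos [Hdecr [Henum [K [HK ->]]]]].
  exists (Nat.max 1 (Nat.max K (Z.to_nat (pos 1%nat)))). intros N HN.
  assert (HpN : pos N = (- Z.of_nat N)%Z) by (pose proof (HK N ltac:(lia)); lia).
  split.
  - intros z Hz. unfold config_O. destruct (Z.ltb_spec z 0).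
    + apply Henum. exists (Z.to_nat (- z)). split; [lia|].
      pose proof (HK (Z.to_nat (- z)) ltac:(lia)). lia.
    + apply (empty_above_pos1 x pos Hdecr Henum). lia.
  - rewrite zsum_over_window_energy, (window_sum_occupied x pos Hdecr Henum) by lia.
    rewrite <- zsum_add. apply zsum_stable; [lia|]. intros k Hk. apply HK; lia.
Qed.

(** * Site weights of mu_p and their exponential tilts *)

Lemma exp_le_compat x y : x <= y -> exp x <= exp y.
Proof. intros [Hlt | ->]; [left; now apply exp_increasing|right; reflexivity]. Qed.

Lemma exp_INR_mul n l : exp (INR n * l) = exp l ^ n.
Proof.
  induction n as [|n IH]; [simpl; now rewrite Rmult_0_l, exp_0|].
  rewrite S_INR, Rmult_plus_distr_r, exp_plus, IH, Rmult_1_l. simpl. ring.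
Qed.

Lemma exp_neg_le_inv_one_plus y : 0 <= y -> exp (- y) <= / (1 + y).
Proof.
  intro Hy. rewrite exp_Ropp. apply Rinv_le_contravar; [lra|].
  pose proof (exp_ineq1_le y). lra.
Qed.

Fixpoint geom_sum (r : R) (N : nat) : R :=
  match N with
  | O => 0
  | S n => geom_sum r n + r ^ S n
  end.

Lemma geom_sum_bounds r N : 0 <= r < 1 -> 0 <= geom_sum r N <= r / (1 - r).
Proof.
  intros Hr.
  assert (Hclosed : geom_sum r N * (1 - r) = r - r ^ S N).
  { induction N as [|N IH]; simpl in *; [ring|]. rewrite Rmult_plus_distr_r, IH. ring. }
  assert (Hnonneg : forall n, 0 <= geom_sum r n).
  { induction n as [|n IH]; simpl; [lra|]. pose proof (pow_le r (S n) (proj1 Hr)). simpl in *. lra. }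
  split; [apply Hnonneg|].
  apply Rmult_le_reg_r with (1 - r); [lra|]. unfold Rdiv.
  rewrite Rmult_assoc, Rinv_l by lra. pose proof (pow_le r (S N) (proj1 Hr)). lra.
Qed.

Definition site_weight (p : R) (i : Z) (b : bool) : R :=
  if b then rho p i else 1 - rho p i.

Definition tilted_weight (p l : R) (i : Z) (b : bool) : R :=
  site_weight p i b * exp (IZR (site_energy i b) * l).

Lemma fin_prod_window p x N : fin_prod p x N = prod_sites (site_weight p) x (window N).
Proof.
  induction N as [|N IH]; simpl; [|rewrite IH]; unfold site_factor, site_weight; ring.
Qed.

Lemma prod_sites_tilted p l x S :
  prod_sites (tilted_weight p l) x S
  = prod_sites (site_weight p) x S * exp (IZR (zsum_over (fun i => site_energy i (x i)) S) * l).
Proof.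
  induction S as [|i S IH]; simpl; [rewrite Rmult_0_l, exp_0; ring|].
  rewrite IH. unfold tilted_weight. rewrite plus_IZR, Rmult_plus_distr_r, exp_plus. ring.
Qed.

Lemma total_mass_site_weight p S : total_mass (site_weight p) S = 1.
Proof. induction S as [|i S IH]; simpl; [reflexivity|]. rewrite IH. unfold site_weight. ring. Qed.

Section Measure.
Variable p : R.
Hypotheses (hp0 : 0 < p) (hp : p < 1 / 2).
Let q := (1 - p) / p.

Lemma q_gt_1 : 1 < q.
Proof.
  apply Rmult_lt_reg_r with p; [exact hp0|]. unfold q, Rdiv.
  rewrite Rmult_assoc, Rinv_l by lra. lra.
Qed.

Lemma rho_bounds i : 0 < rho p i < 1.
Proof.
  assert (0 < powerRZ q i) by (apply powerRZ_lt; pose proof q_gt_1; lra).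
  unfold rho. fold q. split; [apply Rinv_0_lt_compat; lra|].
  rewrite <- Rinv_1. apply Rinv_lt_contravar; lra.
Qed.

Lemma site_weight_bounds i b : 0 <= site_weight p i b <= 1.
Proof. pose proof (rho_bounds i). destruct b; simpl; lra. Qed.

Lemma rho_nat_le n : rho p (Z.of_nat n) <= / q ^ n.
Proof.
  unfold rho. rewrite <- pow_powerRZ. fold q.
  pose proof (pow_lt q n ltac:(pose proof q_gt_1; lra)).
  apply Rinv_le_contravar; lra.
Qed.

Lemma one_minus_rho_neg_nat_le n : 1 - rho p (- Z.of_nat n) <= / q ^ n.
Proof.
  unfold rho. rewrite powerRZ_neg', <- pow_powerRZ. fold q.
  assert (Hy : 0 < / q ^ n) by (apply Rinv_0_lt_compat, pow_lt; pose proof q_gt_1; lra).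
  set (y := / q ^ n) in *.
  replace (1 - / (1 + y)) with (y * / (1 + y)) by (field; lra).
  apply Rle_trans with (y * 1); [apply Rmult_le_compat_l; [lra|]|lra].
  rewrite <- Rinv_1. apply Rinv_le_contravar; lra.
Qed.

Lemma tilted_weight_nonneg l i b : 0 <= tilted_weight p l i b.
Proof.
  unfold tilted_weight. apply Rmult_le_pos; [apply site_weight_bounds|].
  left; apply exp_pos.
Qed.

(* At the sites +m and -m, exactly one of the two states carries energy m, and that
   state has mu_p-probability at most q^-m. *)
Lemma tilted_pair_le l m i : (1 <= m)%nat -> i = Z.of_nat m \/ i = (- Z.of_nat m)%Z ->
  tilted_weight p l i true + tilted_weight p l i false <= 1 + (exp l / q) ^ m.
Proof.
  intros Hm Hi.
  assert (HE : exp (IZR (Z.of_nat m) * l) = exp l ^ m) by now rewrite <- INR_IZR_INZ, exp_INR_mul.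
  assert (Hr : (exp l / q) ^ m = exp l ^ m * / q ^ m) by (unfold Rdiv; now rewrite Rpow_mult_distr, pow_inv).
  pose proof (pow_lt (exp l) m (exp_pos l)).
  pose proof (rho_bounds i).
  unfold tilted_weight, site_weight, site_energy. rewrite Hr.
  destruct Hi as [-> | ->].
  - destruct (Z.ltb_spec (Z.of_nat m) 0); [lia|].
    rewrite !Z.add_0_r, HE. simpl (IZR 0). rewrite Rmult_0_l, exp_0.
    pose proof (rho_nat_le m).
    assert (rho p (Z.of_nat m) * exp l ^ m <= / q ^ m * exp l ^ m)
      by (apply Rmult_le_compat_r; lra).
    lra.
  - destruct (Z.ltb_spec (- Z.of_nat m) 0); [|lia].
    replace (- Z.of_nat m + - - Z.of_nat m)%Z with 0%Z by lia.
    replace (0 + - - Z.of_nat m)%Z with (Z.of_nat m) by lia.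
    rewrite HE. simpl (IZR 0). rewrite Rmult_0_l, exp_0.
    pose proof (one_minus_rho_neg_nat_le m).
    assert ((1 - rho p (- Z.of_nat m)) * exp l ^ m <= / q ^ m * exp l ^ m)
      by (apply Rmult_le_compat_r; lra).
    lra.
Qed.

Lemma total_mass_tilted_le l N :
  total_mass (tilted_weight p l) (window N) <= exp (2 * geom_sum (exp l / q) N).
Proof.
  induction N as [|N IH].
  - unfold tilted_weight, site_weight, site_energy. simpl.
    rewrite !Rmult_0_l, Rmult_0_r, exp_0. lra.
  - cbn [window total_mass geom_sum].
    set (m := S N). set (r := exp l / q) in *.
    assert (Hpair : forall i, i = Z.of_nat m \/ i = (- Z.of_nat m)%Z ->
      0 <= tilted_weight p l i true + tilted_weight p l i false <= exp (r ^ m)).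
    { intros i Hi. pose proof (tilted_weight_nonneg l i true).
      pose proof (tilted_weight_nonneg l i false).
      pose proof (tilted_pair_le l m i ltac:(lia) Hi). pose proof (exp_ineq1_le (r ^ m)).
      fold r in H1. lra. }
    destruct (Hpair (Z.of_nat m) (or_introl eq_refl)) as [H1 H1'].
    destruct (Hpair (- Z.of_nat m)%Z (or_intror eq_refl)) as [H2 H2'].
    pose proof (total_mass_nonneg _ (window N) (tilted_weight_nonneg l)).
    replace (2 * (geom_sum r N + r ^ m)) with (r ^ m + (r ^ m + 2 * geom_sum r N)) by ring.
    rewrite !exp_plus.
    apply Rmult_le_compat; [lra | apply Rmult_le_pos; lra | lra |].
    apply Rmult_le_compat; lra.
Qed.

Lemma fin_prod_nonneg x N : 0 <= fin_prod p x N.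
Proof.
  rewrite fin_prod_window. apply prod_sites_nonneg. intros; apply site_weight_bounds.
Qed.

Lemma fin_prod_decreasing x : Un_decreasing (fun N => fin_prod p x N).
Proof.
  intro N. cbn [fin_prod]. pose proof (fin_prod_nonneg x N).
  assert (Hf : forall i, 0 <= site_factor p x i <= 1) by (intro i; apply site_weight_bounds).
  pose proof (Hf (Z.of_nat (S N))) as [Ha Ha']. pose proof (Hf (- Z.of_nat (S N))%Z) as [Hb Hb'].
  assert (fin_prod p x N * site_factor p x (Z.of_nat (S N)) <= fin_prod p x N)
    by (rewrite <- Rmult_1_r; apply Rmult_le_compat_l; lra).
  assert (0 <= fin_prod p x N * site_factor p x (Z.of_nat (S N))) by now apply Rmult_le_pos.
  assert (fin_prod p x N * site_factor p x (Z.of_nat (S N)) * site_factor p x (- Z.of_nat (S N))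
          <= fin_prod p x N * site_factor p x (Z.of_nat (S N)))
    by (rewrite <- Rmult_1_r; apply Rmult_le_compat_l; lra).
  lra.
Qed.

Lemma fin_prod_O_ge N : / 2 * exp (- (2 * geom_sum (/ q) N)) <= fin_prod p config_O N.
Proof.
  pose proof q_gt_1 as Hq.
  assert (Hsite : forall m, (1 <= m)%nat ->
    site_factor p config_O (Z.of_nat m) = / (1 + (/ q) ^ m) /\
    site_factor p config_O (- Z.of_nat m) = / (1 + (/ q) ^ m)).
  { intros m Hm. unfold site_factor, config_O, rho. fold q.
    destruct (Z.ltb_spec (Z.of_nat m) 0), (Z.ltb_spec (- Z.of_nat m) 0); try lia.
    rewrite powerRZ_neg', <- pow_powerRZ, pow_inv. split; [|reflexivity].
    pose proof (pow_lt q m ltac:(lra)). field. lra. }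
  induction N as [|N IH].
  - simpl. unfold site_factor, config_O, rho. simpl.
    rewrite Rmult_0_r, Ropp_0, exp_0. lra.
  - cbn [fin_prod geom_sum]. destruct (Hsite (S N) ltac:(lia)) as [-> ->].
    set (y := (/ q) ^ S N).
    assert (Hy : 0 <= y) by (apply pow_le; left; apply Rinv_0_lt_compat; lra).
    pose proof (exp_neg_le_inv_one_plus y Hy).
    replace (- (2 * (geom_sum (/ q) N + y))) with (- (2 * geom_sum (/ q) N) + - y + - y) by ring.
    rewrite !exp_plus, <- !Rmult_assoc.
    pose proof (exp_pos (- y)). pose proof (exp_pos (- (2 * geom_sum (/ q) N))).
    assert (/ 2 * exp (- (2 * geom_sum (/ q) N)) * exp (- y)
            <= fin_prod p config_O N * / (1 + y)) by (apply Rmult_le_compat; lra).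
    apply Rmult_le_compat; [| |exact H2|]; [apply Rmult_le_pos; [apply Rmult_le_pos|]|..]; lra.
Qed.

Lemma point_mass_O_pos : exists m, point_mass p config_O m /\ 0 < m.
Proof.
  pose proof q_gt_1 as Hq.
  assert (Hiq : 0 <= / q < 1).
  { split; [left; apply Rinv_0_lt_compat; lra|]. rewrite <- Rinv_1. apply Rinv_lt_contravar; lra. }
  set (c0 := / 2 * exp (- (2 * (/ q / (1 - / q))))).
  assert (Hc0 : 0 < c0) by (pose proof (exp_pos (- (2 * (/ q / (1 - / q))))); unfold c0; lra).
  assert (Hlower : forall N, c0 <= fin_prod p config_O N).
  { intro N. eapply Rle_trans; [|apply fin_prod_O_ge].
    apply Rmult_le_compat_l; [lra|]. apply exp_le_compat.
    pose proof (geom_sum_bounds (/ q) N Hiq). lra. }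
  destruct (decreasing_cv _ (fin_prod_decreasing config_O)) as [m Hm].
  { exists 0. intros y [N ->]. unfold opp_seq. pose proof (fin_prod_nonneg config_O N). lra. }
  exists m. split; [exact Hm|].
  apply Rlt_le_trans with c0; [exact Hc0|].
  apply (Rle_cv_lim (Un := fun _ => c0) (Vn := fun N => fin_prod p config_O N)); [exact Hlower| |exact Hm].
  intros e He. exists 0%nat. intros. unfold Rdist. rewrite Rminus_diag, Rabs_R0. lra.
Qed.

Lemma list_mass_le_sum_fin_prod L r : list_mass p L r ->
  forall N, r <= sum_configs (fun x => fin_prod p x N) L.
Proof.
  revert r; induction L as [|x L IH]; simpl; intros r Hr N; [lra|].
  destruct Hr as [m [r' [Hm [HL ->]]]].
  pose proof (decreasing_ineq _ _ (fin_prod_decreasing x) Hm N). pose proof (IH r' HL N). lra.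
Qed.

Lemma list_mass_le_of_dominated (h : Z -> bool -> R) (k B r : R) L :
  (forall i b, 0 <= h i b) -> 0 <= k ->
  (forall N, total_mass h (window N) <= B) ->
  distinct_configs L ->
  (forall x, In x L -> exists N0, forall N, (N0 <= N)%nat ->
     agrees_with_O_outside N x /\ k * fin_prod p x N <= prod_sites h x (window N)) ->
  list_mass p L r -> k * r <= B.
Proof.
  intros Hh Hk HB HD Hdom Hr.
  destruct (Forall_eventually (fun x N => agrees_with_O_outside N x /\
              k * fin_prod p x N <= prod_sites h x (window N)) L Hdom) as [N HN].
  apply Rle_trans with (sum_configs (fun x => prod_sites h x (window N)) L).
  - apply Rle_trans with (k * sum_configs (fun x => fin_prod p x N) L).
    + apply Rmult_le_compat_l; [exact Hk|]. now apply list_mass_le_sum_fin_prod.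
    + rewrite <- sum_configs_scal. apply sum_configs_le. intros x Hx. apply HN, Hx.
  - eapply Rle_trans; [|apply HB]. apply sum_prod_sites_le_total_mass; [exact Hh|].
    apply distinct_on_window; [exact HD|].
    apply Forall_forall. intros x Hx. apply HN, Hx.
Qed.

Lemma mass_exists_le (A : Config -> Prop) (B : R) :
  (forall L r, distinct_configs L -> Forall A L -> list_mass p L r -> r <= B) ->
  exists s, mass p A s /\ 0 <= s <= B.
Proof.
  intro HB.
  set (E := fun r => exists L, distinct_configs L /\ Forall A L /\ list_mass p L r).
  assert (HE0 : E 0) by (exists nil; split; [constructor|split; [constructor|reflexivity]]).
  destruct (completeness E) as [s Hs].
  - exists B. intros r [L [HD [HA Hr]]]. exact (HB L r HD HA Hr).
  - exists 0. exact HE0.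
  - exists s. split; [exact Hs|]. split; [now apply Hs|].
    apply Hs. intros r [L [HD [HA Hr]]]. exact (HB L r HD HA Hr).
Qed.

Lemma mass_U0_pos : exists z, mass p U0 z /\ 0 < z.
Proof.
  destruct (mass_exists_le U0 1) as [z [Hz _]].
  - intros L r HD HU Hr. rewrite <- (Rmult_1_l r).
    apply (list_mass_le_of_dominated (site_weight p) 1 1 r L); try assumption.
    + intros i b. apply site_weight_bounds.
    + lra.
    + intro N. rewrite total_mass_site_weight. lra.
    + intros x Hx. rewrite Forall_forall in HU.
      destruct (U0_eventually_O x (HU x Hx)) as [N0 HN0]. exists N0. intros N HN.
      split; [now apply HN0|]. rewrite fin_prod_window. lra.
  - destruct point_mass_O_pos as [m [Hm Hm0]]. exists z. split; [exact Hz|].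
    apply Rlt_le_trans with m; [exact Hm0|]. apply Hz.
    exists (config_O :: nil). split; [|split].
    + constructor; constructor.
    + constructor; [exact U0_config_O|constructor].
    + exists m, 0. repeat split; [exact Hm|ring].
Qed.

Lemma mass_large_energy_le (l th : R) : 0 < l -> exp l < q ->
  exists a, mass p (fun x => U0 x /\ exists d : Z, DVal x d /\ th < IZR d) a /\
    0 <= a <= exp (- (th * l)) * exp (2 * (exp l / q / (1 - exp l / q))).
Proof.
  intros Hl Hlq. set (r := exp l / q).
  assert (Hr : 0 <= r < 1).
  { pose proof q_gt_1. unfold r. split.
    - apply Rmult_le_pos; [left; apply exp_pos|left; apply Rinv_0_lt_compat; lra].
    - apply Rmult_lt_reg_r with q; [lra|]. unfold Rdiv.
      rewrite Rmult_assoc, Rinv_l by lra. lra. }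
  apply mass_exists_le. intros L a HD HA Ha.
  assert (Hk : exp (th * l) * a <= exp (2 * (r / (1 - r)))).
  { apply (list_mass_le_of_dominated (tilted_weight p l) _ _ a L);
      [apply tilted_weight_nonneg|left; apply exp_pos| |exact HD| |exact Ha].
    - intro N. eapply Rle_trans; [apply total_mass_tilted_le|]. apply exp_le_compat.
      pose proof (geom_sum_bounds r N Hr). fold r. lra.
    - intros x Hx. rewrite Forall_forall in HA.
      destruct (HA x Hx) as [_ [d [Hd Hth]]].
      destruct (DVal_eventually x d Hd) as [N0 HN0]. exists N0. intros N HN.
      destruct (HN0 N HN) as [Hagree Henergy]. split; [exact Hagree|].
      rewrite prod_sites_tilted, Henergy, <- fin_prod_window, Rmult_comm.
      apply Rmult_le_compat_l; [apply fin_prod_nonneg|].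
      apply exp_le_compat, Rmult_le_compat_r; lra. }
  rewrite exp_Ropp. pose proof (exp_pos (th * l)).
  apply Rmult_le_reg_l with (exp (th * l)); [lra|].
  rewrite <- Rmult_assoc, Rinv_r, Rmult_1_l by lra. exact Hk.
Qed.

End Measure.

(** * Choice of the tilt and the asymptotics in t *)

Lemma exists_tilt (q c : R) : 1 < q -> / ln q < c ->
  exists l, 0 < l /\ exp l < q /\ 1 < c * l.
Proof.
  intros Hq Hc.
  assert (Hlq : 0 < ln q) by (rewrite <- ln_1; apply ln_increasing; lra).
  assert (Hc0 : 0 < c) by (pose proof (Rinv_0_lt_compat _ Hlq); lra).
  assert (Hic : / c < ln q).
  { rewrite <- (Rinv_inv (ln q)). apply Rinv_lt_contravar; [|exact Hc].
    apply Rmult_lt_0_compat; [apply Rinv_0_lt_compat|]; lra. }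
  pose proof (Rinv_0_lt_compat _ Hc0).
  exists ((/ c + ln q) / 2). split; [lra|split].
  - rewrite <- (exp_ln q) at 2 by lra. apply exp_increasing. lra.
  - replace (c * ((/ c + ln q) / 2)) with ((1 + c * ln q) / 2) by (field; lra).
    apply Rmult_lt_compat_l with (r := c) in Hic; [|exact Hc0].
    rewrite Rinv_r in Hic by lra. lra.
Qed.

Lemma t_mul_exp_neg_ln (t a : R) : 0 < t -> t * exp (- (a * ln t)) = exp (- ((a - 1) * ln t)).
Proof.
  intro Ht. rewrite <- (exp_ln t) at 1 by exact Ht. rewrite <- exp_plus. f_equal. ring.
Qed.

Lemma exp_neg_mul_ln_small (beta K eps : R) : 0 < beta -> 0 < K -> 0 < eps ->
  exists T, 0 < T /\ forall t, T <= t -> K * exp (- (beta * ln t)) < eps.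
Proof.
  intros Hb HK He.
  set (s := (Rabs (ln (K / eps)) + 1) / beta).
  exists (exp s). split; [apply exp_pos|]. intros t Ht.
  assert (Hs : s <= ln t).
  { destruct (Rle_lt_dec s (ln t)) as [|Hlt]; [assumption|].
    apply exp_increasing in Hlt. rewrite exp_ln in Hlt by (pose proof (exp_pos s); lra). lra. }
  assert (Hbig : ln (K / eps) < beta * ln t).
  { apply Rmult_le_compat_l with (r := beta) in Hs; [|lra].
    replace (beta * s) with (Rabs (ln (K / eps)) + 1) in Hs by (unfold s; field; lra).
    pose proof (Rle_abs (ln (K / eps))). lra. }
  assert (Hexp : exp (- (beta * ln t)) < eps / K).
  { replace (eps / K) with (exp (- ln (K / eps))).
    - apply exp_increasing. lra.
    - rewrite exp_Ropp, exp_ln by (apply Rdiv_lt_0_compat; lra). field. lra. }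
  apply Rmult_lt_compat_l with (r := K) in Hexp; [|exact HK].
  replace (K * (eps / K)) with eps in Hexp by (field; lra). exact Hexp.
Qed.

Theorem lemma4p3 (p c : R) (hp0 : 0 < p) (hp : p < 1 / 2)
  (hc : / Rabs (ln ((1 - p) / p)) < c) :
  forall eps : R, 0 < eps ->
  exists T : R, 0 < T /\
    forall t : R, T <= t ->
      exists v : R,
        cond_prob p (fun x => exists d : Z, DVal x d /\ c * ln t < IZR d) v /\
        Rabs (t * v) < eps.
Proof.
  intros eps Heps.
  set (q := (1 - p) / p) in *.
  pose proof (q_gt_1 p hp0 hp) as Hq. fold q in Hq.
  rewrite Rabs_right in hc by (left; rewrite <- ln_1; apply ln_increasing; lra).
  destruct (exists_tilt q c Hq hc) as [l [Hl0 [Hlq Hcl]]].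
  destruct (mass_U0_pos p hp0 hp) as [z [Hz Hz0]].
  set (G := exp (2 * (exp l / q / (1 - exp l / q)))).
  destruct (exp_neg_mul_ln_small (c * l - 1) (G / z) eps) as [T [HT0 HT]];
    [lra | apply Rdiv_lt_0_compat; [apply exp_pos|exact Hz0] | exact Heps|].
  exists T. split; [exact HT0|]. intros t Ht.
  destruct (mass_large_energy_le p hp0 hp l (c * ln t) Hl0 Hlq) as [a [Ha [Ha0 HaG]]].
  fold q G in HaG. replace (c * ln t * l) with (c * l * ln t) in HaG by ring.
  exists (a / z). split; [exists a, z; auto|].
  assert (Htz : 0 < t / z) by (apply Rdiv_lt_0_compat; lra).
  replace (t * (a / z)) with (t / z * a) by (field; lra).
  rewrite Rabs_right by (apply Rle_ge, Rmult_le_pos; lra).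
  apply Rle_lt_trans with (G / z * exp (- ((c * l - 1) * ln t))); [|now apply HT].
  rewrite <- t_mul_exp_neg_ln by lra.
  replace (G / z * (t * exp (- (c * l * ln t))))
    with (t / z * (exp (- (c * l * ln t)) * G)) by (field; lra).
  apply Rmult_le_compat_l; lra.
Qed.
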